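(* Let $A,C$ be logically independent events. (a) If $P(C)=1$, $P(C|A)=1$ and $P(C|\bar A)<1$ in a coherent assessment, then $P(A)=1$. (b) The family $\{C, C|A\}$ does not p-entail $A$, and the iterated conditional $A\,|\,(C\wedge(C|A))$, defined as $A\wedge C\wedge(C|A)+\mu(1-C\wedge(C|A))$ with $\mu$ its prevision, is not identically equal to $1$: if $P(C|A)=1$, every $\mu\in[0,1]$ is coherent and the iterated conditional takes value $1$ on $AC$, $0$ on $\bar AC$, and $\mu$ on $\bar C$. *)

(* Coherence in the sense of de Finetti / Gilio (betting scheme)
   for finite families of conditional random quantities over a finite sample
   space Omega; conditional events are the special case of indicators. *)
From HB Require Import structures.
From mathcomp Require Import all_boot all_order all_algebra.
Set Implicit Arguments. Unset Strict Implicit. Unset Printing Implicit Defensive.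
Import Order.TTheory GRing.Theory Num.Theory.
Local Open Scope ring_scope.

Section Coherence.
Variables (R : realFieldType) (Omega : finType).

Definition ind (E : {set Omega}) (w : Omega) : R := (w \in E)%:R.

(* an assessed conditional random quantity X|H with prevision m : (X, H, m) *)
Definition cq := ((Omega -> R) * {set Omega} * R)%type.
Definition cq0 : cq := (fun _ => 0, set0, 0).

Definition cqX (F : seq cq) (i : nat) := (nth cq0 F i).1.1.
Definition cqH (F : seq cq) (i : nat) := (nth cq0 F i).1.2.
Definition cqP (F : seq cq) (i : nat) := (nth cq0 F i).2.

Definition gain (F : seq cq) (s : 'I_(size F) -> R) (w : Omega) : R :=
  \sum_(i < size F) s i * ind (cqH F i) w * (cqX F i w - cqP F i).

Definition coherent (F : seq cq) : Prop :=
  forall s : 'I_(size F) -> R, (exists i, s i != 0) ->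
    exists w, (exists2 i, s i != 0 & w \in cqH F i) /\ 0 <= gain s w.

Definition cev (E H : {set Omega}) (p : R) : cq := (ind E, H, p).
Definition uev (E : {set Omega}) (p : R) : cq := cev E setT p.

Definition logically_independent (A C : {set Omega}) : Prop :=
  [/\ A :&: C != set0, A :&: ~: C != set0, ~: A :&: C != set0
    & ~: A :&: ~: C != set0].

Definition p_consistent (F : seq ({set Omega} * {set Omega})) : Prop :=
  coherent [seq cev eh.1 eh.2 1 | eh <- F].

Definition p_entails (F : seq ({set Omega} * {set Omega}))
    (E H : {set Omega}) : Prop :=
  forall z : R, coherent ([seq cev eh.1 eh.2 1 | eh <- F] ++ [:: cev E H z]) ->
    z = 1.

(* Gilio-Sanfilippo conjunction of an (unconditional) event E with the
   conditional event E2|H2, where y = P(E2|H2):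
   1 on E E2 H2, 0 on (not E) or (not E2) H2, y on E (not H2). *)
Definition conjE (E E2 H2 : {set Omega}) (y : R) (w : Omega) : R :=
  if w \in E then (if w \in H2 then ind E2 w else y) else 0.

(* iterated conditional A | (C /\ (C|A)) := A /\ C /\ (C|A) + mu (1 - C /\ (C|A)),
   with y = P(C|A) and mu its prevision *)
Definition iterA_CCA (A C : {set Omega}) (y mu : R) (w : Omega) : R :=
  conjE (A :&: C) C A y w + mu * (1 - conjE C C A y w).

End Coherence.

(* For (a), the
   stakes 1, -1, -1, P(C|A) - P(C|~A) on C, C|A, C|~A, A have the constant gain
   P(C|A) P(A) + P(C|~A) (1 - P(A)) - P(C), so coherence enforces the law of
   total probability, which with P(C) = P(C|A) = 1 > P(C|~A) leaves P(A) = 1.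
   For (b), P(A) = 0 is coherent together with P(C) = P(C|A) = 1, and for the
   iterated conditional every system of stakes has mean gain zero under the
   distribution p mu, p (1 - mu), 1 - p on the constituents AC, ~AC, ~C. *)
From HB Require Import structures.
From mathcomp Require Import all_boot all_order all_algebra.
From mathcomp Require Import ring.
Import Order.TTheory GRing.Theory Num.Theory.
Set Implicit Arguments.
Unset Strict Implicit.
Unset Printing Implicit Defensive.

Local Open Scope ring_scope.

Lemma convex_comb3_ge0 (R : realFieldType) (l1 l2 l3 g1 g2 g3 : R) :
  0 <= l1 -> 0 <= l2 -> 0 <= l3 -> l1 + l2 + l3 = 1 ->
  l1 * g1 + l2 * g2 + l3 * g3 = 0 -> [\/ 0 <= g1, 0 <= g2 | 0 <= g3].
Proof.
move=> l1_ge0 l2_ge0 l3_ge0 l_sum g_mean.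
have [g1_ge0|g1_lt0] := leP 0 g1; first exact: Or31.
have [g2_ge0|g2_lt0] := leP 0 g2; first exact: Or32.
have [g3_ge0|g3_lt0] := leP 0 g3; first exact: Or33.
pose m := Num.max g1 (Num.max g2 g3).
have m_lt0 : m < 0 by rewrite !gt_max g1_lt0 g2_lt0 g3_lt0.
have [le1 le2 le3] : [/\ g1 <= m, g2 <= m & g3 <= m].
  by rewrite !le_max !lexx !orbT.
have : l1 * g1 + l2 * g2 + l3 * g3 <= (l1 + l2 + l3) * m.
  by rewrite !mulrDl !lerD // ler_wpM2l.
by rewrite l_sum mul1r g_mean leNgt m_lt0.
Qed.

Section Gains.
Variables (R : realFieldType) (Omega : finType).
Implicit Types (F : seq (cq R Omega)) (w : Omega).

Lemma gain_nil (s : 'I_0 -> R) w : gain (F := [::]) s w = 0.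
Proof. by rewrite /gain big_ord0. Qed.

Lemma gain_cons (f : cq R Omega) F (s : 'I_(size (f :: F)) -> R) w :
  gain s w = s ord0 * ind R f.1.2 w * (f.1.1 w - f.2)
             + gain (fun i : 'I_(size F) => s (lift ord0 i)) w.
Proof. by rewrite /gain big_ord_recl. Qed.

Lemma gainZ F (t : R) (s : 'I_(size F) -> R) w :
  gain (fun i => t * s i) w = t * gain s w.
Proof. by rewrite /gain mulr_sumr; apply: eq_bigr => i _; rewrite !mulrA. Qed.

Lemma gain_eq0 F (s : 'I_(size F) -> R) w :
  (forall i, s i != 0 -> w \in cqH F i -> cqX F i w = cqP F i) -> gain s w = 0.
Proof.
move=> fair; rewrite /gain big1 // => i _.
have [-> | /fair fair_i] := eqVneq (s i) 0; first by rewrite !mul0r.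
rewrite /ind; case: (boolP (w \in cqH F i)) => [/fair_i -> | _].
  by rewrite subrr mulr0.
by rewrite mulr0 mul0r.
Qed.

Lemma not_coherent_sure_loss F (s : 'I_(size F) -> R) :
  (exists i, s i != 0) -> (forall w, gain s w < 0) -> ~ coherent F.
Proof.
move=> s_nz loss /(_ s s_nz) [w [_]]; apply/negP; rewrite -ltNge; exact: loss.
Qed.

Lemma coherent_fair_point F w :
  (forall i : 'I_(size F), w \in cqH F i /\ cqX F i w = cqP F i) -> coherent F.
Proof.
move=> fair s [i s_i]; exists w; split; first by exists i; case: (fair i).
by rewrite gain_eq0 // => j _ _; case: (fair j).
Qed.

End Gains.

Section Events.
Variables (R : realFieldType) (Omega : finType) (A C : {set Omega}).

Lemma coherent_total_probability (p y z x : R) :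
  coherent [:: uev C p; cev C A y; cev C (~: A) z; uev A x] ->
  p = y * x + z * (1 - x).
Proof.
set d := y * x + z * (1 - x) - p.
have gain_base w :
    gain (F := [:: uev C p; cev C A y; cev C (~: A) z; uev A x])
         (fun i => [:: 1; -1; -1; z - y]`_i) w = d.
  rewrite !gain_cons gain_nil /= /ind !inE.
  by case: (w \in A); case: (w \in C) => /=; rewrite /d; ring.
move=> coh; apply/eqP/negPn/negP => neq_p.
have d_nz : d != 0 by rewrite /d subr_eq0 eq_sym.
apply: (not_coherent_sure_loss (s := fun i => - d * [:: 1; -1; -1; z - y]`_i) _ _ coh).
  by exists ord0; rewrite /= mulr1 oppr_eq0.
by move=> w; rewrite gainZ gain_base mulNr oppr_lt0 -expr2 exprn_even_gt0.
Qed.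

Lemma coherent_certain_conditionals_prob1 (x z : R) : z < 1 ->
  coherent [:: uev C 1; cev C A 1; cev C (~: A) z; uev A x] -> x = 1.
Proof.
move=> z_lt1 /coherent_total_probability total.
have : (1 - z) * (1 - x) = 1 - (1 * x + z * (1 - x)) by ring.
rewrite -total subrr => /eqP.
by rewrite mulf_eq0 !subr_eq0 eq_sym (lt_eqF z_lt1) => /= /eqP.
Qed.

Lemma p_consistent_C_CA : A :&: C != set0 -> p_consistent R [:: (C, setT); (C, A)].
Proof.
case/set0Pn=> w; rewrite inE => /andP [wA wC].
apply: (coherent_fair_point (w := w)) => -[[|[|//]] ?].
  by rewrite /cqH /cqX /cqP /= /ind in_setT wC.
by rewrite /cqH /cqX /cqP /= /ind wA wC.
Qed.

Lemma not_p_entails_C_CA_A : A :&: C != set0 -> ~: A :&: C != set0 ->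
  ~ p_entails R [:: (C, setT); (C, A)] A setT.
Proof.
case/set0Pn=> w1; rewrite inE => /andP [w1A w1C].
case/set0Pn=> w2; rewrite !inE => /andP [w2nA w2C].
move/(_ 0) => entails.
suff coh : coherent [:: cev C setT (1 : R); cev C A 1; cev A setT 0].
  by move: (entails coh) => /eqP; rewrite eq_sym oner_eq0.
move=> s [i s_i]; pose c := s (lift ord0 (lift ord0 ord0)).
have gain_w1 : gain s w1 = c.
  by rewrite !gain_cons gain_nil /= /ind w1A w1C in_setT /= /c; ring.
have gain_w2 : gain s w2 = 0.
  by rewrite !gain_cons gain_nil /= /ind (negbTE w2nA) w2C in_setT /=; ring.
have [c_ge0 | c_lt0] := leP 0 c.
  exists w1; rewrite gain_w1; split=> //; exists i => //.
  by case: i s_i => [[|[|[|//]]] ?] _; rewrite /cqH /= ?in_setT.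
exists w2; rewrite gain_w2; split=> //; exists (lift ord0 (lift ord0 ord0)).
  exact: ltr0_neq0.
by rewrite /cqH /= in_setT.
Qed.

Lemma iterA_CCA_certainE (mu : R) w :
  iterA_CCA A C 1 mu w = if w \in C then ind R A w else mu.
Proof.
rewrite /iterA_CCA /conjE /ind inE.
by case: (w \in A); case: (w \in C) => /=; rewrite ?subrr ?mulr0 ?addr0 ?add0r ?subr0 ?mulr1.
Qed.

Lemma coherent_iterA_CCA (p mu : R) :
  A :&: C != set0 -> ~: A :&: C != set0 -> ~: A :&: ~: C != set0 ->
  0 <= p <= 1 -> 0 <= mu <= 1 ->
  coherent [:: uev C p; cev C A 1; ((iterA_CCA A C 1 mu : Omega -> R), setT, mu)].
Proof.
case/set0Pn=> w1; rewrite inE => /andP [w1A w1C].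
case/set0Pn=> w2; rewrite !inE => /andP [w2nA w2C].
case/set0Pn=> w3; rewrite !inE => /andP [w3nA w3nC].
move=> /andP [p_ge0 p_le1] /andP [mu_ge0 mu_le1].
set F := (X in coherent X) => s [i s_i].
pose a := s ord0; pose c := s (lift ord0 (lift ord0 ord0)).
have gainE w : gain s w = a * (ind R C w - p)
    + s (lift ord0 ord0) * ind R A w * (ind R C w - 1) + c * (iterA_CCA A C 1 mu w - mu).
  by rewrite !gain_cons gain_nil /= /ind !inE /= /a /c; ring.
have gain_w1 : gain s w1 = a * (1 - p) + c * (1 - mu).
  by rewrite gainE iterA_CCA_certainE /ind w1A w1C /=; ring.
have gain_w2 : gain s w2 = a * (1 - p) - c * mu.
  by rewrite gainE iterA_CCA_certainE /ind (negbTE w2nA) w2C /=; ring.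
have gain_w3 : gain s w3 = - (a * p).
  by rewrite gainE iterA_CCA_certainE /ind (negbTE w3nA) (negbTE w3nC) /=; ring.
have [ac_nz | /norP [/negPn/eqP a0 /negPn/eqP c0]] :=
  boolP ((a != 0) || (c != 0)); last first.
  exists w1; rewrite gain_w1 a0 c0 !mul0r addr0; split=> //; exists i => //.
  by case: i s_i => [[|[|[|//]]] ?] _; rewrite /cqH /= ?in_setT.
have covered w : exists2 j, s j != 0 & w \in cqH F j.
  by case/orP: ac_nz => ?; [exists ord0 | exists (lift ord0 (lift ord0 ord0))];
    rewrite // /cqH /= in_setT.
have [g_ge0 | g_ge0 | g_ge0] : [\/ 0 <= gain s w1, 0 <= gain s w2 | 0 <= gain s w3].
  apply: (@convex_comb3_ge0 _ (p * mu) (p * (1 - mu)) (1 - p)).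
  - exact: mulr_ge0.
  - by rewrite mulr_ge0 ?subr_ge0.
  - by rewrite subr_ge0.
  - ring.
  - rewrite gain_w1 gain_w2 gain_w3; ring.
- by exists w1.
- by exists w2.
- by exists w3.
Qed.

End Events.

Theorem mainTheorem13 (R : realFieldType) (Omega : finType)
    (A C : {set Omega}) :
  logically_independent A C ->
  (forall x z : R, z < 1 ->
     coherent [:: uev C 1; cev C A 1; cev C (~: A) z; uev A x] -> x = 1) /\
  (p_consistent R [:: (C, setT); (C, A)] /\
   ~ p_entails R [:: (C, setT); (C, A)] A setT) /\
  (forall p mu : R, 0 <= p <= 1 -> 0 <= mu <= 1 ->
     coherent [:: uev C p; cev C A 1;
                  ((iterA_CCA A C 1 mu : Omega -> R), setT, mu)] /\
     (forall w, w \in A :&: C -> iterA_CCA A C 1 mu w = 1) /\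
     (forall w, w \in ~: A :&: C -> iterA_CCA A C 1 mu w = 0) /\
     (forall w, w \in ~: C -> iterA_CCA A C 1 mu w = mu) /\
     (exists w, iterA_CCA A C 1 mu w != 1)).
Proof.
case=> AC _ nAC nAnC.
split; first exact: coherent_certain_conditionals_prob1.
split; first by split; [exact: p_consistent_C_CA | exact: not_p_entails_C_CA_A AC nAC].
move=> p mu p01 mu01; split; first exact: coherent_iterA_CCA.
split; first by move=> w; rewrite inE iterA_CCA_certainE /ind => /andP [-> ->].
split; first by move=> w; rewrite !inE iterA_CCA_certainE /ind => /andP [/negbTE -> ->].
split; first by move=> w; rewrite inE iterA_CCA_certainE => /negbTE ->.
case/set0Pn: nAC => w; rewrite !inE => /andP [/negbTE nA wC].
by exists w; rewrite iterA_CCA_certainE wC /ind nA eq_sym oner_neq0.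
Qed.
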